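(* Let $q$ be a prime power, $\ell\geq 1$, and let $\mathcal{A}$ be a central hyperplane arrangement in $\mathbb{F}_q^\ell$. The following are equivalent: (a) $\mathcal{A}=\mathcal{A}_{all}(\mathbb{F}_q^\ell)$; (b) $|\mathcal{A}|=\frac{q^\ell-1}{q-1}$; (c) $\chi(\mathcal{A},t)=(t-1)(t-q)\cdots(t-q^{\ell-1})$; (d) $\chi(\mathcal{A},q^{\ell-1})=0$.
   Context: A (central) hyperplane arrangement $\mathcal{A}$ in a vector space $V$ over a field $\mathbb{K}$ is a finite set of linear subspaces of codimension one. $\mathcal{A}_{all}(V)$ denotes the arrangement consisting of all hyperplanes (codimension-one linear subspaces) of $V$ when $V$ is a vector space over a finite field. $L(\mathcal{A})$ denotes the set of all intersections of subsets of $\mathcal{A}$ (including $V$ itself), ordered by reverse inclusion, with minimal element $\hat 0=V$. The Möbius function $\mu$ on $L(\mathcal{A})$ is defined by $\mu(\hat0)=1$ and $\mu(X)=-\sum_{Y<X}\mu(Y)$ for $X>\hat0$. The characteristic polynomial is $\chi(\mathcal{A},t)=\sum_{X\in L(\mathcal{A})}\mu(X)t^{\dim X}$. *)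

(* Subspaces of F^l (F a finite field, q = #|F|) are
   represented by their canonical row-space matrices <<M>>%MS : 'M[F]_l. *)
From HB Require Import structures.
From mathcomp Require Import all_boot all_order all_algebra all_field.
Set Implicit Arguments. Unset Strict Implicit. Unset Printing Implicit Defensive.
Import GRing.Theory.
Local Open Scope ring_scope.

Section Arr.
Variables (F : finFieldType) (l : nat).

Definition is_subspace (M : 'M[F]_l) : bool := (<<M>>%MS == M).

Definition is_hyperplane (H : 'M[F]_l) : bool :=
  is_subspace H && (\rank H == l.-1)%N.

Definition arrangement (A : {set 'M[F]_l}) : bool :=
  [forall H in A, is_hyperplane H].

Definition A_all : {set 'M[F]_l} := [set H | is_hyperplane H].

Definition fullsp : 'M[F]_l := <<(1%:M : 'M[F]_l)>>%MS.

(* intersection of a subset B of A (empty intersection = V) *)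
Definition meet (B : {set 'M[F]_l}) : 'M[F]_l :=
  <<(\bigcap_(H in B) H)%MS>>%MS.

Definition intlat (A : {set 'M[F]_l}) : {set 'M[F]_l} :=
  [set meet B | B in powerset A].

(* Moebius function on L(A) (ordered by reverse inclusion, so Y < X in L(A)
   iff X is a proper subspace of Y), computed with a fuel argument:
   mu(V) = 1, mu(X) = - sum_{Y < X} mu(Y).  Ranks strictly increase along
   the recursion and are bounded by l, so fuel l.+1 is sufficient. *)
Fixpoint mobius_fuel (A : {set 'M[F]_l}) (n : nat) (X : 'M[F]_l) : int :=
  match n with
  | 0 => 1
  | n'.+1 =>
      if X == fullsp then 1
      else - \sum_(Y in intlat A | (X < Y)%MS) mobius_fuel A n' Y
  end.

Definition mobius (A : {set 'M[F]_l}) (X : 'M[F]_l) : int :=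
  mobius_fuel A l.+1 X.

Definition charpoly_arr (A : {set 'M[F]_l}) : {poly int} :=
  \sum_(X in intlat A) (mobius A X)%:P * 'X^(\rank X).

End Arr.

From HB Require Import structures.
From mathcomp Require Import all_boot all_order all_algebra all_field.
From mathcomp Require Import zify.
Set Implicit Arguments. Unset Strict Implicit. Unset Printing Implicit Defensive.
Import GRing.Theory Num.Theory.
Local Open Scope ring_scope.

(** Finite field method.  An [n x l] matrix [W] is a vector of
    [(F_{q^n})^l], and it lies on the extension of a hyperplane [H] exactly
    when all rows of [W] lie in [H].  Möbius inversion over the smallest flat
    containing [W] gives [chi(A, q^n) = #{W | W lies on no H in A}].
    For [A = A_all] these are the row-full matrices, counted by
    [prod_(i < l) (q^n - q^i)]; agreeing at infinitely many points, the two
    polynomials coincide, which is (a) => (c), and (c) => (d) is trivial.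
    If [chi(A, q^(l-1)) = 0], every hyperplane [H0] must belong to [A],
    since a basis of [H0] lies on no other hyperplane: (d) => (a).
    Finally [-|A|] is the coefficient of [t^(l-1)] in [chi(A, t)], the
    hyperplanes being the flats of rank [l - 1], each of Möbius value [-1];
    comparing with [A_all] gives (a) <=> (b). *)

Section RowSpaces.
Variable F : fieldType.

Lemma genmx_eq_sub_rank n (X Y : 'M[F]_n) : <<X>>%MS = X -> <<Y>>%MS = Y ->
  (X <= Y)%MS -> (\rank Y <= \rank X)%N -> X = Y.
Proof.
move=> cX cY sXY rYX.
have /eqmxP eXY : (X == Y)%MS.
  by rewrite -(mxrank_leqif_eq sXY); apply/eqP/anti_leq; rewrite rYX mxrankS.
by rewrite -cX -cY; apply: eq_genmx.
Qed.

Lemma ltmx_genmx n (X Y : 'M[F]_n) : <<X>>%MS = X -> <<Y>>%MS = Y ->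
  (X < Y)%MS = (X <= Y)%MS && (Y != X).
Proof.
move=> cX cY; rewrite ltmxE; apply: andb_id2l => sXY; congr negb.
apply/idP/eqP => [sYX|->]; last exact: submx_refl.
by apply: genmx_eq_sub_rank => //; apply: mxrankS.
Qed.

Lemma row_free_col_mx m n (r : 'rV[F]_n) (M : 'M[F]_(m, n)) :
  row_free (col_mx r M) = row_free M && ~~ (r <= M)%MS.
Proof.
rewrite /row_free -addsmxE.
have [rM|nrM] := boolP (r <= M)%MS.
  rewrite andbF (addsmx_idPr rM).
  by apply/negbTE; rewrite neq_ltn ltnS rank_leq_row.
have -> : \rank (r + M)%MS = (1 + \rank M)%N.
  apply/eqP; rewrite eqn_leq; apply/andP; split.
    by apply: leq_trans (mxrank_adds_leqif r M) _; rewrite leq_add2r rank_leq_row.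
  suff : (M < r + M)%MS by rewrite ltmxErank => /andP[].
  by rewrite ltmxE addsmxSr addsmx_sub submx_refl andbT.
by rewrite eqn_add2l andbT.
Qed.

Lemma not_row_full_sub_kermx n l (W : 'M[F]_(n, l)) :
  ~~ row_full W -> exists2 u : 'rV[F]_l, u != 0 & (W <= kermx u^T)%MS.
Proof.
move=> nfW; pose u := nz_row (kermx W^T).
have u0 : u != 0.
  rewrite nz_row_eq0 -mxrank_eq0 mxrank_ker mxrank_tr.
  by move: nfW; rewrite /row_full; have := rank_leq_col W; lia.
exists u => //; rewrite sub_kermx -trmx_eq0 trmx_mul trmxK.
by rewrite -sub_kermx nz_row_sub.
Qed.

End RowSpaces.

Lemma poly_inj_roots_eq0 (R : idomainType) (p : {poly R}) (f : nat -> R) :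
  injective f -> (forall k, p.[f k] = 0) -> p = 0.
Proof.
move=> f_inj pf0; apply/eqP/negPn/negP => p0.
suff : (size (map f (iota 0 (size p))) < size p)%N by rewrite size_map size_iota ltnn.
apply: max_poly_roots p0 _ _; last by rewrite map_inj_uniq ?iota_uniq.
by apply/allP => _ /mapP[k _ ->]; rewrite /root pf0.
Qed.

Lemma sum_expn_divn q l : (1 < q)%N ->
  ((q ^ l - 1) %/ (q - 1))%N = (\sum_(i < l) q ^ i)%N.
Proof. by move=> q_gt1; rewrite !subn1 predn_exp mulKn //; lia. Qed.

Section FiniteRowSpaces.
Variable F : finFieldType.
Local Notation q := #|F|.

Lemma card_submx k m n (X : 'M[F]_(m, n)) :
  #|[set W : 'M[F]_(k, n) | (W <= X)%MS]| = (q ^ (k * \rank X))%N.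
Proof.
have -> : [set W : 'M[F]_(k, n) | (W <= X)%MS] =
          [set C *m row_base X | C in [set: 'M[F]_(k, \rank X)]].
  apply/setP => W; rewrite inE -(eq_row_base X).
  by apply/submxP/imsetP => [[D ->]|[D _ ->]]; exists D.
by rewrite card_imset ?cardsT ?card_mx //; apply: row_free_inj (row_base_free X).
Qed.

Lemma card_row_free m n :
  #|[set M : 'M[F]_(m, n) | row_free M]| = (\prod_(i < m) (q ^ n - q ^ i))%N.
Proof.
elim: m => [|m IHm].
  rewrite big_ord0 (_ : [set M | _] = setT) ?cardsT ?card_mx ?muln0 //.
  by apply/setP => M; rewrite !inE /row_free eqn_leq rank_leq_row.
rewrite big_ord_recr /= -IHm -[LHS]sum1_card [LHS]big_mkcond /=.
rewrite (reindex (fun p : 'rV[F]_n * 'M[F]_(m, n) => col_mx p.1 p.2 : 'M_(1 + m, n)))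
  /=; last first.
  apply: onW_bij; exists (fun M : 'M[F]_(1 + m, n) => (usubmx M, dsubmx M)).
    by case=> r M /=; rewrite col_mxKu col_mxKd.
  by move=> M /=; rewrite vsubmxK.
rewrite -(pair_bigA _ (fun r M =>
  if col_mx r M \in [set M | row_free M] then 1 else 0)%N).
rewrite exchange_big /= -sum1_card [in RHS]big_mkcond /= big_distrl /=.
apply: eq_bigr => M _; rewrite inE.
under eq_bigr do rewrite inE row_free_col_mx.
have [fM|] := boolP (row_free M); last by rewrite big1 ?mul0n.
rewrite mul1n /=.
have -> : (\sum_(r : 'rV[F]_n) (if ~~ (r <= M)%MS then 1 else 0))%N =
          #|~: [set r : 'rV[F]_n | (r <= M)%MS]|.
  by rewrite -sum1_card [RHS]big_mkcond /=; apply: eq_bigr => r _; rewrite !inE.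
move: (cardsC [set r : 'rV[F]_n | (r <= M)%MS]).
by rewrite card_submx card_mx !mul1n (eqP fM) => <-; rewrite addKn.
Qed.

End FiniteRowSpaces.

Section Arrangements.
Variables (F : finFieldType) (l : nat).
Hypothesis l_gt0 : (0 < l)%N.
Local Notation q := #|F|.
Local Notation V := (fullsp F l).
Implicit Types (A B : {set 'M[F]_l}) (X Y H : 'M[F]_l).

Lemma rank_fullsp : \rank V = l.
Proof. by rewrite genmxE mxrank1. Qed.

Lemma genmx_fullsp : <<V>>%MS = V.
Proof. exact: genmx_id. Qed.

Lemma eq_fullsp X : <<X>>%MS = X -> \rank X = l -> X = V.
Proof.
move=> cX rX; apply: genmx_eq_sub_rank genmx_fullsp _ _ => //.
  by rewrite genmxE submx1.
by rewrite rX rank_fullsp.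
Qed.

Lemma meet_set0 : meet set0 = V.
Proof. by rewrite /meet big_pred0 // => H; rewrite inE. Qed.

Lemma genmx_meet B : <<meet B>>%MS = meet B.
Proof. exact: genmx_id. Qed.

Lemma meet_sub B H : H \in B -> (meet B <= H)%MS.
Proof. by move=> HB; rewrite genmxE; apply: bigcapmx_inf HB _. Qed.

Lemma sub_meet n (W : 'M[F]_(n, l)) B :
  (W <= meet B)%MS = [forall H in B, W <= H]%MS.
Proof. by rewrite genmxE; apply/sub_bigcapmxP/forall_inP => sWB H /sWB. Qed.

Lemma genmx_intlat A X : X \in intlat A -> <<X>>%MS = X.
Proof. by case/imsetP=> B _ ->; apply: genmx_meet. Qed.

Lemma fullsp_intlat A : V \in intlat A.
Proof. by rewrite -meet_set0; apply: imset_f; rewrite powersetE sub0set. Qed.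

Lemma mobius_fuelE A n X : (l - \rank X < n)%N -> mobius_fuel A n X = mobius A X.
Proof.
have : (l - \rank X < l.+1)%N by rewrite ltnS leq_subr.
rewrite /mobius; move: l.+1 => n'.
elim: n n' X => [|n IHn] [|n'] X; rewrite ?ltn0 // => /= hn' hn.
case: eqP => // _; congr (- _); apply: eq_bigr => Y /andP[_].
rewrite ltmxErank => /andP[_ rXY]; have := rank_leq_col Y.
by move=> rY; apply: IHn; lia.
Qed.

Lemma mobius_fullsp A : mobius A V = 1.
Proof. by rewrite /mobius /= eqxx. Qed.

Lemma sum_mobius_interval A X : X \in intlat A ->
  \sum_(Y in intlat A | (X <= Y)%MS) mobius A Y = (X == V)%:R.
Proof.
move=> XA; have cX := genmx_intlat XA.
have [->|nXV] := eqVneq X V.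
  rewrite (eq_bigl (pred1 V)) ?big_pred1_eq ?mobius_fullsp // => Y /=.
  apply/andP/eqP => [[YA sVY]|->]; last by rewrite fullsp_intlat submx_refl.
  apply: eq_fullsp; first exact: genmx_intlat YA.
  by apply/eqP; rewrite eqn_leq rank_leq_col -{1}rank_fullsp mxrankS.
rewrite (bigD1 X) /=; last by rewrite XA submx_refl.
rewrite {1}/mobius /= (negbTE nXV) addrC; apply/eqP; rewrite subr_eq0; apply/eqP.
apply: eq_big => Y.
  by rewrite -andbA; apply: andb_id2l => YA; rewrite ltmx_genmx ?(genmx_intlat YA).
case/andP=> /andP[YA sXY] nYX; have := ltmx_genmx cX (genmx_intlat YA).
rewrite sXY nYX ltmxErank => /andP[_ rXY]; have := rank_leq_col Y.
by move=> rY; rewrite mobius_fuelE //; lia.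
Qed.

Lemma arrangement_hyperplane A H : arrangement A -> H \in A ->
  <<H>>%MS = H /\ \rank H = l.-1.
Proof. by move/forall_inP=> hA /hA /andP[/eqP -> /eqP ->]. Qed.

Definition flat_of A n (W : 'M[F]_(n, l)) : 'M[F]_l :=
  meet [set H in A | (W <= H)%MS].

Definition complement A n : {set 'M[F]_(n, l)} :=
  [set W : 'M[F]_(n, l) | [forall H in A, ~~ (W <= H)%MS]].

Lemma flat_of_intlat A n (W : 'M[F]_(n, l)) : flat_of A W \in intlat A.
Proof.
by apply: imset_f; rewrite powersetE; apply/subsetP => H; rewrite inE => /andP[].
Qed.

Lemma flat_of_sub A n (W : 'M[F]_(n, l)) X : X \in intlat A ->
  (flat_of A W <= X)%MS = (W <= X)%MS.
Proof.
case/imsetP=> B; rewrite powersetE => /subsetP sBA ->.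
have sW_flat : (W <= flat_of A W)%MS.
  by rewrite sub_meet; apply/forall_inP => H; rewrite inE => /andP[].
apply/idP/idP => [/(submx_trans sW_flat) // | sWB].
rewrite /meet genmxE; apply/sub_bigcapmxP => H HB; apply: meet_sub.
by rewrite inE sBA //=; move: sWB; rewrite sub_meet => /forall_inP; apply.
Qed.

Lemma flat_of_eq_fullsp A n (W : 'M[F]_(n, l)) : arrangement A ->
  (flat_of A W == V) = (W \in complement A n).
Proof.
move=> hA; rewrite inE; apply/eqP/forall_inP => [WV H HA|WA].
  apply/negP => sWH; have [_ rH] := arrangement_hyperplane hA HA.
  have /mxrankS : (flat_of A W <= H)%MS by apply: meet_sub; rewrite inE HA.
  by rewrite WV rank_fullsp rH; lia.
rewrite /flat_of -meet_set0; congr meet; apply/setP => H; rewrite !inE.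
by apply/negbTE/andP => -[HA sWH]; move: (WA H HA); rewrite sWH.
Qed.

Lemma horner_charpoly_arr A x :
  (charpoly_arr A).[x] = \sum_(X in intlat A) mobius A X * x ^+ \rank X.
Proof.
rewrite horner_sum; apply: eq_bigr => X _.
by rewrite hornerM hornerC hornerXn.
Qed.

Lemma charpoly_arr_expq A n : arrangement A ->
  (charpoly_arr A).[(q ^ n)%:R] = #|complement A n|%:R.
Proof.
move=> hA; rewrite horner_charpoly_arr.
have card_sub X : (q ^ n)%:R ^+ \rank X = \sum_(W : 'M[F]_(n, l)) (W <= X)%MS%:R :> int.
  rewrite -natrX -expnM -(card_submx n X) -sum1_card natr_sum big_mkcond /=.
  by apply: eq_bigr => W _; rewrite inE; case: (W <= X)%MS.
under eq_bigr do rewrite card_sub mulr_sumr.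
rewrite exchange_big /= -sum1_card natr_sum [RHS]big_mkcond /=.
apply: eq_bigr => W _; rewrite -flat_of_eq_fullsp //.
rewrite (_ : (if _ then _ else _) = (flat_of A W == V)%:R); last by case: eqP.
rewrite -(sum_mobius_interval (flat_of_intlat A W)) big_mkcondr /=.
apply: eq_bigr => X XA; rewrite flat_of_sub //.
by case: (W <= X)%MS; rewrite ?mulr1 ?mulr0.
Qed.

Lemma arrangement_A_all : arrangement (A_all F l).
Proof. by apply/forall_inP => H; rewrite inE. Qed.

Lemma arrangement_sub_A_all A : arrangement A -> A \subset A_all F l.
Proof. by move/forall_inP=> hA; apply/subsetP => H /hA; rewrite inE. Qed.

Lemma complement_A_all n :
  complement (A_all F l) n = [set W : 'M[F]_(n, l) | row_full W].
Proof.
apply/setP => W; rewrite !inE; apply/forall_inP/idP => [WA|fW H].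
  apply/negPn/negP => /not_row_full_sub_kermx[u u0 sWu].
  suff /WA : <<kermx u^T>>%MS \in A_all F l by rewrite genmxE sWu.
  rewrite inE /is_hyperplane /is_subspace genmx_id genmxE mxrank_ker mxrank_tr.
  by rewrite rank_rV u0 subn1 !eqxx.
rewrite inE => /andP[_ /eqP rH]; apply/negP => /mxrankS.
by rewrite (eqP fW) rH; lia.
Qed.

Lemma card_complement_A_all n :
  #|complement (A_all F l) n| = (\prod_(i < l) (q ^ n - q ^ i))%N.
Proof.
rewrite -card_row_free.
have -> : [set M : 'M[F]_(l, n) | row_free M] = trmx @: complement (A_all F l) n.
  rewrite complement_A_all //; apply/setP => M; rewrite inE.
  apply/idP/imsetP => [fM|[W]].
    by exists M^T; rewrite ?trmxK // inE /row_full mxrank_tr.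
  by rewrite inE /row_full => fW ->; rewrite /row_free mxrank_tr.
by rewrite card_imset //; apply: trmx_inj.
Qed.

Lemma charpoly_A_all :
  charpoly_arr (A_all F l) = \prod_(i < l) ('X - ((q ^ i)%:R)%:P).
Proof.
apply/eqP; rewrite -subr_eq0; apply/eqP.
have q_gt1 : (1 < q)%N := card_finNzRing_gt1 F.
apply: (@poly_inj_roots_eq0 _ _ (fun k => (q ^ (l + k))%:R)).
  by move=> i j /eqP; rewrite eqr_nat => /eqP /(expnI q_gt1) /addnI.
move=> k; rewrite hornerD hornerN charpoly_arr_expq ?arrangement_A_all //.
rewrite card_complement_A_all horner_prod natr_prod.
apply/eqP; rewrite subr_eq0; apply/eqP.
apply: eq_bigr => i _; rewrite hornerXsubC natrB // leq_pexp2l //; first lia.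
by have := ltn_ord i; lia.
Qed.

Section Hyperplanes.
Variable A : {set 'M[F]_l}.
Hypothesis hA : arrangement A.

Lemma intlat_hyperplane X : (X \in intlat A) && (\rank X == l.-1) = (X \in A).
Proof.
apply/idP/idP => [/andP[XA /eqP rX]|HA]; last first.
  have [cX ->] := arrangement_hyperplane hA HA; rewrite eqxx andbT.
  by apply/imsetP; exists [set X]; rewrite ?powersetE ?sub1set // /meet big_set1 cX.
have cX := genmx_intlat XA; case/imsetP: XA => B; rewrite powersetE => /subsetP sBA eX.
have [B0|[H HB]] := set_0Vmem B.
  by move: rX; rewrite eX B0 meet_set0 rank_fullsp; lia.
have [cH rH] := arrangement_hyperplane hA (sBA _ HB).
suff -> : X = H by apply: sBA.
by apply: genmx_eq_sub_rank; rewrite ?rX ?rH // eX meet_sub.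
Qed.

Lemma mobius_hyperplane H : H \in A -> mobius A H = -1.
Proof.
move=> HA; have [cH rH] := arrangement_hyperplane hA HA.
have /andP[HL _] : (H \in intlat A) && (\rank H == l.-1) by rewrite intlat_hyperplane.
have nHV : H != V by apply/eqP => HV; move: rH; rewrite HV rank_fullsp; lia.
have := sum_mobius_interval HL.
rewrite (negbTE nHV) (bigD1 H) /=; last by rewrite HL submx_refl.
rewrite (eq_bigl (pred1 V)) ?big_pred1_eq ?mobius_fullsp => [/eqP|Y /=].
  by rewrite addr_eq0 => /eqP.
apply/andP/eqP => [[/andP[YL sHY] nYH]|->]; last first.
  by rewrite fullsp_intlat genmxE submx1 eq_sym nHV.
have := ltmx_genmx cH (genmx_intlat YL); rewrite sHY nYH ltmxErank => /andP[_ rHY].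
by apply: eq_fullsp (genmx_intlat YL) _; have := rank_leq_col Y; lia.
Qed.

Lemma coef_charpoly_arr : (charpoly_arr A)`_l.-1 = - #|A|%:R.
Proof.
rewrite coef_sum (eq_bigr (fun X => if l.-1 == \rank X then mobius A X else 0)).
  rewrite -big_mkcondr (eq_bigl (mem A)) => [|X]; last first.
    by rewrite eq_sym intlat_hyperplane.
  by rewrite (eq_bigr (fun=> -1)) ?sumr_const ?mulNrn // => H /mobius_hyperplane.
by move=> X _; rewrite coefCM coefXn; case: eqP; rewrite ?mulr1 ?mulr0.
Qed.

Lemma charpoly_arr_root_A_all : (charpoly_arr A).[(q ^ l.-1)%:R] = 0 -> A = A_all F l.
Proof.
rewrite charpoly_arr_expq // => /eqP; rewrite pnatr_eq0 cards_eq0 => /eqP noW.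
apply/eqP; rewrite eqEsubset arrangement_sub_A_all //=; apply/subsetP => H0.
rewrite inE => /andP[/eqP cH0 /eqP rH0]; apply/negPn/negP => H0A.
pose W0 : 'M[F]_(l.-1, l) := castmx (rH0, erefl l) (row_base H0).
suff : W0 \in complement A l.-1 by rewrite noW inE.
rewrite inE; apply/forall_inP => H HA; apply/negP.
rewrite /W0 (eqmx_cast _ (rH0, erefl l)) eq_row_base => sH0H.
have [cH rH] := arrangement_hyperplane hA HA.
suff eH : H0 = H by rewrite eH HA in H0A.
by apply: genmx_eq_sub_rank; rewrite ?rH ?rH0.
Qed.

End Hyperplanes.

Lemma card_A_all : #|A_all F l| = (\sum_(i < l) q ^ i)%N.
Proof.
have := coef_charpoly_arr arrangement_A_all.
rewrite charpoly_A_all.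
rewrite -(big_map (fun i : 'I_l => (q ^ i)%:R) xpredT (fun x => 'X - x%:P)).
set s := map _ _.
have sz_s : size s = l by rewrite size_map /index_enum locked_withE -enumT size_enum_ord.
rewrite -[in LHS]sz_s coefPn_prod_XsubC ?sz_s -?lt0n // big_map -natr_sum.
by move/oppr_inj/eqP; rewrite eqr_nat => /eqP.
Qed.

End Arrangements.

Theorem mainTheorem3 (F : finFieldType) (l : nat) (hl : (1 <= l)%N)
    (A : {set 'M[F]_l}) (hA : arrangement A) :
  let q := #|F| in
  [<-> A = A_all F l;
       #|A| = ((q ^ l - 1) %/ (q - 1))%N;
       charpoly_arr A = \prod_(i < l) ('X - ((q ^ i)%:R)%:P);
       (charpoly_arr A).[((q ^ l.-1)%N)%:R] = 0].
Proof.
move=> q; have q_gt1 : (1 < q)%N := card_finNzRing_gt1 F.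
rewrite sum_expn_divn //; tfae.
- by move=> ->; rewrite card_A_all.
- move=> cardA; suff -> : A = A_all F l by rewrite charpoly_A_all.
  by apply/eqP; rewrite eqEcard arrangement_sub_A_all // card_A_all // cardA /=.
- move=> ->; rewrite horner_prod (bigD1 (Ordinal (etrans (ltn_predL l) hl))) //=.
  by rewrite hornerXsubC subrr mul0r.
- exact: charpoly_arr_root_A_all.
Qed.
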